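(* Let $r, a \in \mathbb{N}$ and $b, d \in \mathbb{Z}$ with $a \mid \mathrm{lcm}(b,d)$. Then for any completely multiplicative functions $f_1,\ldots,f_r:\mathbb{N}\to\mathbb{S}^1$, $$\liminf_{n\to\infty} \max_{1\le j\le r} |f_j(an+b)-f_j(an+d)| = 0.$$
   Context: $\mathbb{N}=\{1,2,\dots\}$, $\mathbb{S}^1$ the unit circle in $\mathbb{C}$; completely multiplicative means $f(mn)=f(m)f(n)$ for all $m,n\in\mathbb{N}$. Convention: $\mathrm{lcm}(b,0)=0$. *)

From Stdlib Require Import Reals ZArith List.
From Coquelicot Require Import Coquelicot.
Open Scope R_scope.

(* A function f : nat -> C is regarded as a function on N = {1,2,...};
   its value at 0 is irrelevant. *)

Definition circle_valued (f : nat -> C) : Prop :=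
  forall n : nat, (1 <= n)%nat -> Cmod (f n) = 1.

Definition completely_multiplicative (f : nat -> C) : Prop :=
  forall m n : nat, (1 <= m)%nat -> (1 <= n)%nat -> f (m * n)%nat = (f m * f n)%C.

(* max_{0 <= j < r} g j (the functions are indexed by j = 0..r-1 instead of 1..r). *)
Definition max_upto (r : nat) (g : nat -> R) : R :=
  fold_right Rmax 0 (map g (seq 0 r)).

(* the natural number a*n + b (meaningful once a*n + b >= 1, i.e. for all large n). *)
Definition lin_arg (a n : nat) (b : Z) : nat :=
  Z.to_nat (Z.of_nat a * Z.of_nat n + b)%Z.

(* Wlog b < d; put e := d - b.  If P = a n + b and P + e = a n + d satisfy
     P D = e x (y + 1)   and   (P + e) D = e y (x + 1)
   for positive integers D, x, y, then complete multiplicativity and |f| = 1 give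
     |f(P) - f(P + e)| <= |f(x) - f(y)| + |f(y + 1) - f(x + 1)|.
   Such quadruples arise from any x = t_i + s < y = t_j + s with a (t_j - t_i) | t_i,
   t_i | s (s + 1) and a | e s - b; the last two congruences are solvable together
   because a | lcm(b, d) splits a into coprime divisors of b and of d.  Taking a long
   chain t_0 < t_1 < ... with a (t_j - t_i) | t_i, the pigeonhole principle finds
   i < j for which every f_c takes nearly the same values at x, y and at x + 1, y + 1. *)

From Stdlib Require Import Reals ZArith List.
From Coquelicot Require Import Coquelicot.
From Stdlib Require Import Znumtheory Zpow_facts Lia Lra Classical.
Open Scope R_scope.
Open Scope Z_scope.

Lemma divide_mul_mono (p q m n : Z) : (p | m) -> (q | n) -> (p * q | m * n).
Proof. intros [k ->] [l ->]. exists (k * l). ring. Qed.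

Lemma rel_prime_mul_divide (p q n : Z) : rel_prime p q -> (p | n) -> (q | n) -> (p * q | n).
Proof.
  intros Hpq [k ->] Hq.
  assert (Hqk : (q | k)).
  { apply Z.gauss with p; [now rewrite Z.mul_comm|].
    now apply Zgcd_1_rel_prime, rel_prime_sym. }
  destruct Hqk as [l ->]. exists l. ring.
Qed.

Lemma coprime_power_split (w x : Z) : 0 < x ->
  exists x1 x2 k, x = x1 * x2 /\ 0 < x1 /\ 0 <= k /\ rel_prime x1 w /\ (x2 | w ^ k).
Proof.
  intros Hx. assert (Hx0 : 0 <= x) by lia. revert Hx.
  pattern x. apply Z_lt_induction; [clear x Hx0; intros x IH Hx|exact Hx0].
  destruct (Z.eq_dec (Z.gcd x w) 1) as [Hcop|Hncop].
  - exists x, 1, 0.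
    split; [lia|split; [lia|split; [lia|split]]].
    + now apply Zgcd_1_rel_prime.
    + apply Z.divide_1_l.
  - destruct (Z.gcd_divide_l x w) as [y Hy].
    assert (Hg : 1 < Z.gcd x w).
    { pose proof (Z.gcd_nonneg x w).
      assert (Z.gcd x w <> 0) by (intro G; rewrite G in Hy; lia). lia. }
    destruct (IH y ltac:(nia) ltac:(nia)) as (x1 & x2 & k & -> & Hx1 & Hk & Hcop & Hdiv).
    exists x1, (x2 * Z.gcd x w), (Z.succ k).
    split; [lia|split; [lia|split; [lia|split; [exact Hcop|]]]].
    rewrite Z.pow_succ_r, Z.mul_comm by lia.
    apply divide_mul_mono; [apply Z.gcd_divide_r|exact Hdiv].
Qed.

Lemma divide_lcm_coprime_split (a b d x : Z) : 0 < a -> 0 < x -> (a | Z.lcm b d) ->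
  exists a1 a2 x1 x2, a = a1 * a2 /\ x = x1 * x2 /\ (a1 | b) /\ (a2 | d) /\
    0 < a1 * x1 /\ 0 < a2 * x2 /\ rel_prime (a1 * x1) (a2 * x2).
Proof.
  intros Ha Hx Hdiv.
  (* Split a and x into their parts coprime to w := d / gcd(b, d) and supported on the
     primes of w; the former divides b and the latter divides d. *)
  set (h := Z.gcd b d). set (w := d / h).
  destruct (coprime_power_split w a Ha) as (a1 & a2 & k & Ea & Ha1 & Hk & Ha1w & Ha2w).
  destruct (coprime_power_split w x Hx) as (x1 & x2 & l & Ex & Hx1 & Hl & Hx1w & Hx2w).
  exists a1, a2, x1, x2.
  assert (Hdvd : (a1 | b) /\ (a2 | d)).
  { destruct (Z.eq_dec h 0) as [H0|H0].
    { apply Z.gcd_eq_0 in H0 as [-> ->]. split; apply Z.divide_0_r. }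
    destruct (Z.gcd_divide_l b d) as [bh Hbh]. destruct (Z.gcd_divide_r b d) as [dh Hdh].
    fold h in Hbh, Hdh.
    assert (Hw : w = dh) by (unfold w; rewrite Hdh; apply Z.div_mul, H0).
    assert (Hcop : rel_prime bh w).
    { apply Zgcd_1_rel_prime. rewrite Hw.
      rewrite <- (Z.div_mul bh h), <- (Z.div_mul dh h), <- Hbh, <- Hdh by exact H0.
      apply Z.gcd_div_gcd; [exact H0|reflexivity]. }
    assert (Hlcm : (a | b * w) /\ (a | bh * d)).
    { unfold Z.lcm in Hdiv. fold h w in Hdiv. rewrite Z.divide_abs_r in Hdiv.
      split; [exact Hdiv|]. rewrite Hdh.
      replace (bh * (dh * h)) with (b * dh) by (rewrite Hbh; ring).
      rewrite <- Hw. exact Hdiv. }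
    destruct Hlcm as [Hbw Hbhd]. split.
    - apply Z.gauss with w.
      + apply Z.divide_trans with a; [exists a2; lia|]. now rewrite Z.mul_comm.
      + now apply Zgcd_1_rel_prime.
    - apply Z.gauss with bh.
      + apply Z.divide_trans with a; [exists a1; lia|exact Hbhd].
      + apply Zgcd_1_rel_prime, (rel_prime_div (w ^ k)); [|exact Ha2w].
        apply rel_prime_sym, rel_prime_Zpower_r; [exact Hk|exact Hcop]. }
  assert (Ha2 : 0 < a2) by nia. assert (Hx2 : 0 < x2) by nia.
  split; [lia|split; [lia|split; [tauto|split; [tauto|split; [nia|split; [nia|]]]]]].
  apply rel_prime_sym, (rel_prime_div (w ^ (k + l))).
  - apply rel_prime_sym, rel_prime_Zpower_r; [lia|].
    apply rel_prime_sym, rel_prime_mult; apply rel_prime_sym; assumption.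
  - rewrite Z.pow_add_r by lia.
    apply divide_mul_mono; assumption.
Qed.

Lemma rel_prime_residues_0_minus1 (m1 m2 X : Z) : 0 < m1 -> 0 < m2 -> rel_prime m1 m2 ->
  exists s, X <= s /\ (m1 | s) /\ (m2 | s + 1).
Proof.
  intros H1 H2 Hcop. destruct (rel_prime_bezout _ _ Hcop) as [u v Huv].
  remember (Z.abs X + Z.abs (u * m1)) as T eqn:HT.
  assert (1 <= m1 * m2) by nia.
  assert (T <= m1 * m2 * T) by (assert (0 <= T) by lia; nia).
  exists (m1 * m2 * T - u * m1). split; [lia|split].
  - exists (m2 * T - u). ring.
  - exists (m1 * T + v). rewrite <- Huv. ring.
Qed.

Lemma exists_shift_residues (a b d N X : Z) : 0 < a -> 0 < N -> (a | Z.lcm b d) ->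
  exists s, X <= s /\ (N | s * (s + 1)) /\ (a | (d - b) * s - b).
Proof.
  intros Ha HN Hdiv.
  destruct (divide_lcm_coprime_split a b d N Ha HN Hdiv)
    as (a1 & a2 & N1 & N2 & -> & -> & Hb & Hd & H1 & H2 & Hcop).
  destruct (rel_prime_residues_0_minus1 _ _ X H1 H2 Hcop) as (s & HX & Hs & Hs1).
  exists s. split; [exact HX|split].
  - apply divide_mul_mono; eapply Z.divide_trans; [|exact Hs| |exact Hs1];
      apply Z.divide_factor_r.
  - apply rel_prime_mul_divide.
    + pose proof (rel_prime_div _ _ _ Hcop (Z.divide_factor_l a1 N1)) as Ha1.
      apply rel_prime_sym, (rel_prime_div _ _ _ (rel_prime_sym _ _ Ha1)), Z.divide_factor_l.
    + apply Z.divide_sub_r; [|exact Hb].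
      apply Z.divide_mul_r, Z.divide_trans with (a1 * N1); [apply Z.divide_factor_l|exact Hs].
    + replace ((d - b) * s - b) with ((d - b) * (s + 1) - d) by ring.
      apply Z.divide_sub_r; [|exact Hd].
      apply Z.divide_mul_r, Z.divide_trans with (a2 * N2); [apply Z.divide_factor_l|exact Hs1].
Qed.

Fixpoint prod_upto (t : nat -> Z) (K : nat) : Z :=
  match K with O => 1 | S K' => prod_upto t K' * t K' end.

Lemma prod_upto_pos (t : nat -> Z) (K : nat) : (forall i, 1 <= t i) -> 1 <= prod_upto t K.
Proof. intros Ht. induction K as [|K IH]; simpl; [lia|]. specialize (Ht K). nia. Qed.

Lemma divide_prod_upto (t : nat -> Z) (K i : nat) : (i < K)%nat -> (t i | prod_upto t K).
Proof.
  induction K as [|K IH]; simpl; intros Hi; [lia|].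
  destruct (Nat.eq_dec i K) as [->|Hne].
  - apply Z.divide_factor_r.
  - apply Z.divide_mul_l, IH. lia.
Qed.

Lemma divisor_chain (a : Z) (K : nat) : 0 < a -> exists t : nat -> Z,
  (forall i, 1 <= t i) /\
  (forall i j, (i < j < K)%nat -> t i < t j /\ (a * (t j - t i) | t i)).
Proof.
  intros Ha. induction K as [|K [t [Ht Hchain]]].
  { exists (fun _ => 1). split; intros; lia. }
  set (L := a * prod_upto t K).
  assert (HL : 1 <= L) by (pose proof (prod_upto_pos t K Ht); unfold L; nia).
  exists (fun i => match i with O => L | S i => L + t i end). split.
  - intros [|i]; [exact HL|]. specialize (Ht i). lia.
  - intros [|i] [|j] Hij; try lia.
    + split; [specialize (Ht j); lia|].
      replace (L + t j - L) with (t j) by ring.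
      apply Z.mul_divide_mono_l, divide_prod_upto. lia.
    + destruct (Hchain i j ltac:(lia)) as [Hlt Hdiv]. split; [lia|].
      replace (L + t j - (L + t i)) with (t j - t i) by ring.
      apply Z.divide_add_r; [|exact Hdiv].
      apply Z.mul_divide_mono_l, Z.divide_trans with (t j); [|apply divide_prod_upto; lia].
      replace (t j) with (t i + (t j - t i)) at 2 by ring.
      apply Z.divide_add_r; [|apply Z.divide_refl].
      apply Z.divide_trans with (a * (t j - t i)); [apply Z.divide_factor_r|exact Hdiv].
Qed.

Lemma collision_identities (a b d s x y : Z) : 0 < a -> 0 <= s -> b < d -> 1 <= x < y ->
  (a * (y - x) | x) -> (x | s * (s + 1)) -> (a | (d - b) * s - b) ->
  exists P, (a | P - b) /\ s <= P /\
    P * (y - x) = (d - b) * (x + s) * (y + s + 1) /\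
    (P + (d - b)) * (y - x) = (d - b) * (y + s) * (x + s + 1).
Proof.
  intros Ha Hs Hbd Hxy Hx Hss Hres.
  assert (Hk : (a * (y - x) | (x + s) * (x + s + 1))).
  { replace ((x + s) * (x + s + 1)) with (x * (x + 2 * s + 1) + s * (s + 1)) by ring.
    apply Z.divide_add_r; [now apply Z.divide_mul_l|].
    now apply Z.divide_trans with x. }
  destruct Hk as [k Hk].
  assert (Hk0 : 0 <= k) by nia.
  exists ((d - b) * (a * k + x + s)). split; [|split; [nia|split]].
  - replace ((d - b) * (a * k + x + s) - b)
      with (a * ((d - b) * k) + (d - b) * x + ((d - b) * s - b)) by ring.
    apply Z.divide_add_r; [apply Z.divide_add_r|exact Hres].
    + apply Z.divide_factor_l.
    + apply Z.divide_mul_r, Z.divide_trans with (a * (y - x)); [apply Z.divide_factor_l|exact Hx].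
  - transitivity ((d - b) * (k * (a * (y - x)) + (x + s) * (y - x))); [ring|].
    rewrite <- Hk. ring.
  - transitivity ((d - b) * (k * (a * (y - x)) + (x + s) * (y - x) + (y - x))); [ring|].
    rewrite <- Hk. ring.
Qed.

Lemma collision_family (a b d X : Z) (K : nat) : 0 < a -> b < d -> (a | Z.lcm b d) ->
  exists B : nat -> Z, (forall k, X <= B k) /\ forall i j, (i < j < K)%nat ->
    exists P D, (a | P - b) /\ X <= P /\ 1 <= D /\
      P * D = (d - b) * B i * (B j + 1) /\ (P + (d - b)) * D = (d - b) * B j * (B i + 1).
Proof.
  intros Ha Hbd Hdiv.
  destruct (divisor_chain a K Ha) as (t & Ht & Hchain).
  destruct (exists_shift_residues a b d (prod_upto t K) (Z.abs X) Ha) as (s & Hs & Hss & Hres);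
    [pose proof (prod_upto_pos t K Ht); lia|exact Hdiv|].
  exists (fun k => t k + s). split; [intros k; specialize (Ht k); lia|].
  intros i j Hij. destruct (Hchain i j Hij) as [Htij Hdvd].
  assert (Hti : (t i | s * (s + 1))).
  { apply Z.divide_trans with (prod_upto t K); [apply divide_prod_upto; lia|exact Hss]. }
  specialize (Ht i).
  destruct (collision_identities a b d s (t i) (t j)) as (P & HPb & HsP & HP & HPe);
    [exact Ha|lia|exact Hbd|lia|exact Hdvd|exact Hti|exact Hres|].
  exists P, (t j - t i). split; [exact HPb|split; [lia|split; [lia|]]].
  split; [rewrite HP|rewrite HPe]; ring.
Qed.

Close Scope Z_scope.

Definition grid_index (M : nat) (x : R) : nat := Z.to_nat (up ((x + 1) * INR M)).

Definition grid_cell (M : nat) (z : C) : nat * nat :=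
  (grid_index M (fst z), grid_index M (snd z)).

Lemma grid_index_lt (M : nat) (x : R) : -1 <= x <= 1 -> (grid_index M x < 2 * M + 2)%nat.
Proof.
  intros Hx. unfold grid_index. destruct (archimed ((x + 1) * INR M)) as [_ Hup].
  pose proof (pos_INR M).
  assert (Hlt : (up ((x + 1) * INR M) < Z.of_nat (2 * M + 2))%Z).
  { apply lt_IZR. rewrite <- INR_IZR_INZ, plus_INR, mult_INR. simpl. nra. }
  lia.
Qed.

Lemma grid_index_eq_close (M : nat) (x y : R) : (0 < M)%nat -> -1 <= x -> -1 <= y ->
  grid_index M x = grid_index M y -> Rabs (x - y) < / INR M.
Proof.
  intros HM Hx Hy E. unfold grid_index in E.
  assert (HMpos : 0 < INR M) by (apply lt_0_INR; lia).
  destruct (archimed ((x + 1) * INR M)) as [Hx1 Hx2].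
  destruct (archimed ((y + 1) * INR M)) as [Hy1 Hy2].
  assert (Hxz : (0 < up ((x + 1) * INR M))%Z) by (apply lt_IZR; nra).
  assert (Hyz : (0 < up ((y + 1) * INR M))%Z) by (apply lt_IZR; nra).
  assert (Eup : up ((x + 1) * INR M) = up ((y + 1) * INR M)) by lia.
  rewrite Eup in Hx1, Hx2.
  apply Rmult_lt_reg_r with (INR M); [exact HMpos|].
  rewrite Rinv_l by lra. rewrite <- (Rabs_right (INR M)) at 1 by lra.
  rewrite <- Rabs_mult. apply Rabs_def1; nra.
Qed.

Lemma unit_circle_cover (eps : R) : 0 < eps ->
  exists (cell : C -> nat * nat) (U : list (nat * nat)),
    (forall z, Cmod z = 1 -> In (cell z) U) /\
    (forall z w, Cmod z = 1 -> Cmod w = 1 -> cell z = cell w -> Cmod (z - w) < eps).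
Proof.
  intros Heps. destruct (INR_unbounded (2 / eps)) as [M HM].
  assert (H2eps : 0 < 2 / eps) by (apply Rdiv_lt_0_compat; lra).
  assert (HM0 : (0 < M)%nat) by (apply INR_lt; simpl; lra).
  assert (HMeps : 2 / INR M < eps).
  { assert (HMpos : 0 < INR M) by (apply lt_0_INR; lia).
    apply Rmult_lt_compat_l with (r := eps) in HM; [|exact Heps].
    replace (eps * (2 / eps)) with 2 in HM by (field; lra).
    apply Rmult_lt_reg_r with (INR M); [exact HMpos|].
    unfold Rdiv. rewrite Rmult_assoc, Rinv_l by lra. lra. }
  exists (grid_cell M), (list_prod (seq 0 (2 * M + 2)) (seq 0 (2 * M + 2))).
  assert (Hcoord : forall u : C, Cmod u = 1 -> -1 <= fst u <= 1 /\ -1 <= snd u <= 1).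
  { intros u Hu. pose proof (Rmax_Cmod u) as Hmax. rewrite Hu in Hmax.
    split; apply Rabs_le_between; eapply Rle_trans; [|exact Hmax| |exact Hmax];
      [apply Rmax_l|apply Rmax_r]. }
  split.
  - intros z Hz. destruct (Hcoord z Hz).
    apply in_prod; apply in_seq; split; try lia; apply grid_index_lt; assumption.
  - intros z w Hz Hw E. injection E as E1 E2.
    destruct (Hcoord z Hz) as [Hz1 Hz2], (Hcoord w Hw) as [Hw1 Hw2].
    apply grid_index_eq_close in E1, E2; try lra; try assumption.
    assert (Hsqrt2 : sqrt 2 < 2).
    { pose proof (sqrt_sqrt 2 ltac:(lra)). pose proof (sqrt_pos 2). nra. }
    assert (HMpos : 0 < / INR M) by (apply Rinv_0_lt_compat, lt_0_INR; lia).
    assert (Hmax : Rmax (Rabs (fst (z - w)%C)) (Rabs (snd (z - w)%C)) < / INR M)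
      by (apply Rmax_lub_lt; assumption).
    pose proof (Cmod_2Rmax (z - w)) as Hc.
    pose proof (Rle_trans _ _ _ (Rabs_pos _)
                  (Rmax_l (Rabs (fst (z - w)%C)) (Rabs (snd (z - w)%C)))).
    unfold Rdiv in HMeps. nra.
Qed.

Fixpoint words {A : Type} (U : list A) (L : nat) : list (list A) :=
  match L with
  | O => nil :: nil
  | S L => flat_map (fun x => map (cons x) (words U L)) U
  end.

Lemma length_words {A : Type} (U : list A) (L : nat) : length (words U L) = (length U ^ L)%nat.
Proof.
  induction L as [|L IH]; simpl; [reflexivity|]. rewrite <- IH.
  generalize (words U L) as l. clear IH. intros l.
  induction U as [|x U IHU]; simpl; [reflexivity|].
  rewrite length_app, length_map, IHU. reflexivity.
Qed.

Lemma In_words {A : Type} (U : list A) (l : list A) : incl l U -> In l (words U (length l)).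
Proof.
  induction l as [|x l IH]; simpl; intros Hl; [now left|].
  apply in_flat_map. exists x. split; [apply Hl; now left|].
  apply in_map, IH. intros y Hy. apply Hl. now right.
Qed.

Lemma pigeonhole_words {A : Type} (U : list A) (L K : nat) (h : nat -> list A) :
  (length U ^ L < K)%nat -> (forall k, (k < K)%nat -> length (h k) = L /\ incl (h k) U) ->
  exists i j, (i < j < K)%nat /\ h i = h j.
Proof.
  intros HK Hh. apply NNPP. intros Hnone.
  assert (Hnodup : NoDup (map h (seq 0 K))).
  { apply NoDup_map_NoDup_ForallPairs; [|apply seq_NoDup].
    intros i j Hi Hj Eij. apply in_seq in Hi, Hj.
    destruct (Nat.lt_trichotomy i j) as [Hlt|[Heq|Hgt]]; [|exact Heq|];
      exfalso; apply Hnone; [exists i, j|exists j, i]; split; auto; lia. }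
  assert (Hincl : incl (map h (seq 0 K)) (words U L)).
  { intros l Hl. apply in_map_iff in Hl as [k [<- Hk]]. apply in_seq in Hk.
    destruct (Hh k ltac:(lia)) as [<- HU]. now apply In_words. }
  pose proof (NoDup_incl_length Hnodup Hincl) as Hlen.
  rewrite length_map, length_seq, length_words in Hlen. lia.
Qed.

Lemma cmod_sub_le_of_product_identities (f : nat -> C) (P Q D e x y : nat) :
  circle_valued f -> completely_multiplicative f ->
  (1 <= D)%nat -> (1 <= e)%nat -> (1 <= x)%nat -> (1 <= y)%nat ->
  (P * D = e * x * S y)%nat -> (Q * D = e * y * S x)%nat ->
  Cmod (f P - f Q) <= Cmod (f x - f y) + Cmod (f (S y) - f (S x)).
Proof.
  intros Hcirc Hmul HD He Hx Hy HP HQ.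
  assert (HfP : (f P * f D = f e * f x * f (S y))%C).
  { rewrite <- Hmul, HP, !Hmul by nia. reflexivity. }
  assert (HfQ : (f Q * f D = f e * f y * f (S x))%C).
  { rewrite <- Hmul, HQ, !Hmul by nia. reflexivity. }
  assert (Hdiff : ((f P - f Q) * f D =
                   f e * ((f x - f y) * f (S y) + f y * (f (S y) - f (S x))))%C).
  { transitivity (f P * f D - f Q * f D)%C; [ring|]. rewrite HfP, HfQ. ring. }
  replace (Cmod (f P - f Q)) with (Cmod ((f P - f Q) * f D))
    by (rewrite Cmod_mult, (Hcirc D HD); lra).
  rewrite Hdiff, Cmod_mult, Hcirc, Rmult_1_l by exact He.
  eapply Rle_trans; [apply Cmod_triangle|].
  rewrite !Cmod_mult, (Hcirc (S y)), (Hcirc y) by lia. lra.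
Qed.

Lemma max_upto_nonneg (r : nat) (g : nat -> R) : 0 <= max_upto r g.
Proof.
  unfold max_upto. induction (map g (seq 0 r)) as [|x l IH]; simpl; [lra|].
  eapply Rle_trans; [exact IH|apply Rmax_r].
Qed.

Lemma max_upto_lt (r : nat) (g : nat -> R) (eps : R) : 0 < eps ->
  (forall j, (j < r)%nat -> g j < eps) -> max_upto r g < eps.
Proof.
  intros Heps Hg. unfold max_upto.
  assert (Hl : forall x, In x (map g (seq 0 r)) -> x < eps).
  { intros x Hx. apply in_map_iff in Hx as [j [<- Hj]]. apply in_seq in Hj. apply Hg. lia. }
  induction (map g (seq 0 r)) as [|x l IH]; simpl; [exact Heps|].
  apply Rmax_lub_lt; [apply Hl; now left|apply IH; intros y Hy; apply Hl; now right].
Qed.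

Lemma LimInf_seq_eq_0 (u : nat -> R) : (forall n, 0 <= u n) ->
  (forall eps, 0 < eps -> forall N, exists n, (N <= n)%nat /\ u n < eps) ->
  LimInf_seq u = 0.
Proof.
  intros Hpos Hsmall. apply is_LimInf_seq_unique. intros eps. split.
  - intros N. rewrite Rplus_0_l. exact (Hsmall eps (cond_pos eps) N).
  - exists O. intros n _. pose proof (Hpos n). pose proof (cond_pos eps). lra.
Qed.

Lemma frequently_close_of_lt (r a : nat) (b d : Z) (ha : (1 <= a)%nat) (hbd : (b < d)%Z)
  (hdiv : (Z.of_nat a | Z.lcm b d)%Z) (f : nat -> nat -> C)
  (hS : forall j, (j < r)%nat -> circle_valued (f j))
  (hcm : forall j, (j < r)%nat -> completely_multiplicative (f j))
  (eps : R) (N0 : nat) : 0 < eps ->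
  exists n, (N0 <= n)%nat /\ forall j, (j < r)%nat ->
    Cmod (f j (lin_arg a n b) - f j (lin_arg a n d)) < eps.
Proof.
  intros Heps.
  destruct (unit_circle_cover (eps / 2)) as (cell & U & HU & Hcell); [lra|].
  set (K := S (length (list_prod U U) ^ r)).
  (* The bound keeps every B k positive and forces n = (P - b) / a >= N0. *)
  destruct (collision_family (Z.of_nat a) b d (Z.of_nat a * Z.of_nat N0 + Z.abs b + 1) K)
    as (B & HB & Hfam); [lia|exact hbd|exact hdiv|].
  set (cells k c := (cell (f c (Z.to_nat (B k))), cell (f c (S (Z.to_nat (B k)))))).
  assert (HB1 : forall k, (1 <= Z.to_nat (B k))%nat) by (intros k; specialize (HB k); lia).
  destruct (pigeonhole_words (list_prod U U) r K (fun k => map (cells k) (seq 0 r)))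
    as (i & j & Hij & Hcoll); [unfold K; lia| |].
  { intros k Hk. rewrite length_map, length_seq. split; [reflexivity|].
    intros p Hp. apply in_map_iff in Hp as [c [<- Hc]]. apply in_seq in Hc.
    apply in_prod; apply HU, hS; lia || apply HB1. }
  destruct (Hfam i j Hij) as (P & D & [q Hq] & HP0 & HD & HP & HPe).
  pose proof (HB i). pose proof (HB j).
  exists (Z.to_nat q). split; [nia|intros c Hc].
  replace (lin_arg a (Z.to_nat q) b) with (Z.to_nat P)
    by (unfold lin_arg; f_equal; rewrite Z2Nat.id by nia; lia).
  replace (lin_arg a (Z.to_nat q) d) with (Z.to_nat (P + (d - b)))
    by (unfold lin_arg; f_equal; rewrite Z2Nat.id by nia; lia).
  assert (Hcc : cells i c = cells j c) by (apply (proj1 map_ext_in_iff Hcoll), in_seq; lia).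
  injection Hcc as Hx Hy.
  pose proof (hS c Hc) as Hfc.
  pose proof (Hcell _ _ (Hfc _ (HB1 i)) (Hfc _ (HB1 j)) Hx).
  pose proof (Hcell _ _ (Hfc (S (Z.to_nat (B j))) ltac:(lia))
                        (Hfc (S (Z.to_nat (B i))) ltac:(lia)) (eq_sym Hy)).
  enough (Cmod (f c (Z.to_nat P) - f c (Z.to_nat (P + (d - b)))) <=
          Cmod (f c (Z.to_nat (B i)) - f c (Z.to_nat (B j))) +
          Cmod (f c (S (Z.to_nat (B j))) - f c (S (Z.to_nat (B i))))) by lra.
  apply (cmod_sub_le_of_product_identities (f c) _ _ (Z.to_nat D) (Z.to_nat (d - b))
           (Z.to_nat (B i)) (Z.to_nat (B j)) Hfc (hcm c Hc)); [lia|lia|apply HB1|apply HB1| |];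
    apply Nat2Z.inj; rewrite !Nat2Z.inj_mul, Nat2Z.inj_succ, !Z2Nat.id by lia; lia.
Qed.

Lemma frequently_close (r a : nat) (b d : Z) (ha : (1 <= a)%nat)
  (hdiv : (Z.of_nat a | Z.lcm b d)%Z) (f : nat -> nat -> C)
  (hS : forall j, (j < r)%nat -> circle_valued (f j))
  (hcm : forall j, (j < r)%nat -> completely_multiplicative (f j))
  (eps : R) (N0 : nat) : 0 < eps ->
  exists n, (N0 <= n)%nat /\ forall j, (j < r)%nat ->
    Cmod (f j (lin_arg a n b) - f j (lin_arg a n d)) < eps.
Proof.
  intros Heps. destruct (Z.lt_trichotomy b d) as [Hlt|[<-|Hgt]].
  - now apply frequently_close_of_lt.
  - exists N0. split; [lia|]. intros j _.
    replace (f j (lin_arg a N0 b) - f j (lin_arg a N0 b))%C with (RtoC 0) by ring.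
    rewrite Cmod_0. exact Heps.
  - rewrite Z.lcm_comm in hdiv.
    destruct (frequently_close_of_lt r a d b ha Hgt hdiv f hS hcm eps N0 Heps)
      as [n [Hn Hclose]].
    exists n. split; [exact Hn|]. intros j Hj.
    rewrite <- Cmod_opp, Copp_minus_distr. now apply Hclose.
Qed.

Theorem corollary1p3 (r a : nat) (b d : Z)
  (hr : (1 <= r)%nat) (ha : (1 <= a)%nat)
  (hdiv : Z.divide (Z.of_nat a) (Z.lcm b d))
  (f : nat -> nat -> C)
  (hS : forall j, (j < r)%nat -> circle_valued (f j))
  (hcm : forall j, (j < r)%nat -> completely_multiplicative (f j)) :
  LimInf_seq (fun n : nat =>
     max_upto r (fun j => Cmod (f j (lin_arg a n b) - f j (lin_arg a n d))%C))
  = Finite 0.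
Proof.
  apply LimInf_seq_eq_0; [intros n; apply max_upto_nonneg|].
  intros eps Heps N0.
  destruct (frequently_close r a b d ha hdiv f hS hcm eps N0 Heps) as [n [Hn Hclose]].
  exists n. split; [exact Hn|]. now apply max_upto_lt.
Qed.
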